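(* Let $h:\mathcal S\to\mathbb R$ be bounded, $\lambda\in[0,1]$, $\pi$ any policy and $\epsilon\ge0$. If $\inf_{b\in\mathbb R}\|h+b-V^*\|_\infty\le\epsilon$, then $$\mathrm{Bias}(h,\lambda,\pi)\le\frac{(1-\lambda\gamma)^2}{(1-\gamma)^2}\,\epsilon.$$
   Context: Let $\mathcal M=(\mathcal S,\mathcal A,P,r,\gamma)$ be a discounted MDP with transition kernel $P(\cdot|s,a)$, reward $r:\mathcal S\times\mathcal A\to[0,1]$ and discount $\gamma\in[0,1)$. A policy $\pi$ is a Markov kernel from $\mathcal S$ to distributions on $\mathcal A$; $\rho^\pi(s)$ (resp. $\rho^\pi(d_0)$) is the trajectory law with $s_0=s$ (resp. $s_0\sim d_0$), $a_t\sim\pi(\cdot|s_t)$, $s_{t+1}\sim P(\cdot|s_t,a_t)$. $V^\pi(s)=\mathbb E_{\rho^\pi(s)}[\sum_t\gamma^tr(s_t,a_t)]$; $V^*=V^{\pi^*}=\sup_\pi V^\pi$ for an optimal policy $\pi^*$ (assumed to exist). For $V:\mathcal S\to\mathbb R$ and a distribution $d$, $V(d)=\mathbb E_{s\sim d}[V(s)]$. A fixed initial distribution $d_0$ is given; $d_t^\pi$ is the law of $s_t$ under $\rho^\pi(d_0)$, $d^\pi=(1-\gamma)\sum_t\gamma^td_t^\pi$, $d^\pi(s,a)=d^\pi(s)\pi(a|s)$. Reshaped MDP: $\widetilde{\mathcal M}=(\mathcal S,\mathcal A,P,\widetilde r,\lambda\gamma)$ with $\widetilde r(s,a)=r(s,a)+(1-\lambda)\gamma\,\mathbb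 E_{s'\sim P(\cdot|s,a)}[h(s')]$; $\widetilde V^\pi(s)=\mathbb E_{\rho^\pi(s)}[\sum_t(\lambda\gamma)^t\widetilde r(s_t,a_t)]$; $\widetilde V^*=\sup_\pi\widetilde V^\pi$ (attained). The bias is $$\mathrm{Bias}(h,\lambda,\pi):=\big(V^*(d_0)-\widetilde V^*(d_0)\big)+\frac{\gamma(1-\lambda)}{1-\gamma}\,\mathbb E_{(s,a)\sim d^\pi}\,\mathbb E_{s'\sim P(\cdot|s,a)}\big[h(s')-\widetilde V^*(s')\big].$$ *)

From HB Require Import structures.
From mathcomp Require Import all_boot all_order all_algebra.
From mathcomp Require Import all_classical all_reals all_analysis.
Set Implicit Arguments. Unset Strict Implicit. Unset Printing Implicit Defensive.
Import Order.TTheory GRing.Theory Num.Theory.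
Local Open Scope classical_set_scope.
Local Open Scope ring_scope.

Section MDP.
Context {R : realType} {dS dA : measure_display}
  {S : measurableType dS} {A : measurableType dA}.

Notation trans := (R.-pker (S * A)%type ~> S).
Notation policy := (R.-pker S ~> A).

Definition Pop (P : trans) (pi : policy) (f : S -> R) : S -> R :=
  fun s => \int[pi s]_(a in setT) (\int[P (s, a)]_(s' in setT) f s').

Definition polavg (pi : policy) (G : S -> A -> R) : S -> R :=
  fun s => \int[pi s]_(a in setT) G s a.

(* discounted value  V^pi(s) = E_{rho^pi(s)} [ sum_t g^t rr(s_t,a_t) ]
   = sum_t g^t E[rr(s_t,a_t) | s_0 = s], the expectation of the t-th term
   being computed through the t-fold iterated kernel. *)
Definition value (g : R) (P : trans) (rr : S -> A -> R) (pi : policy) : S -> R :=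
  fun s => limn (fun n => \sum_(0 <= t < n)
                  g ^+ t * iter t (Pop P pi) (polavg pi rr) s).

Definition at_dist (d : probability S R) (V : S -> R) : R :=
  \int[d]_(s in setT) V s.

(* E_{(s,a) ~ d^pi} G(s,a), where d^pi = (1-g) sum_t g^t d_t^pi (x) pi
   and d_t^pi is the law of s_t under rho^pi(d0) *)
Definition occ_exp (g : R) (P : trans) (d0 : probability S R) (pi : policy)
  (G : S -> A -> R) : R :=
  (1 - g) * limn (fun n => \sum_(0 <= t < n)
     g ^+ t * at_dist d0 (iter t (Pop P pi) (polavg pi G))).

Definition reshaped_reward (g lam : R) (P : trans) (r : S -> A -> R) (h : S -> R)
  : S -> A -> R :=
  fun s a => r s a + (1 - lam) * g * \int[P (s, a)]_(s' in setT) h s'.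

Definition Bias (g lam : R) (P : trans) (d0 : probability S R) (h : S -> R)
  (Vstar Vtstar : S -> R) (pi : policy) : R :=
  (at_dist d0 Vstar - at_dist d0 Vtstar)
  + g * (1 - lam) / (1 - g) *
    occ_exp g P d0 pi (fun s a => \int[P (s, a)]_(s' in setT) (h s' - Vtstar s')).

End MDP.

(* If [h + b] is within [e] of [V*], then [V* + d], with
   [d = (1 - lam) g (- b - e) / (1 - lam g)], is a subsolution of the Bellman equation of
   [pistar] in the reshaped MDP, so by comparison the reshaped optimal value dominates the
   reshaped value of [pistar], which dominates [V* + d].  This bounds the gap
   [V*(d0) - V~*(d0)] by [- d] and the integrand [h - V~*] of the occupancy term by
   [- b + e - d]; the two contributions add up to [2 g (1 - lam) e / (1 - g)], which is at
   most [(1 - lam g)^2 e / (1 - g)^2].  The infimum over [b] need not be attained, so [e]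
   is [eps + (1/2)^n] and [n] goes to infinity. *)

From HB Require Import structures.
From mathcomp Require Import all_boot all_order all_algebra.
From mathcomp Require Import all_classical all_reals all_analysis.
From mathcomp Require Import measurable_realfun.
From mathcomp Require Import ring lra.
Import Order.TTheory GRing.Theory Num.Theory numFieldNormedType.Exports.
Local Open Scope classical_set_scope.
Local Open Scope ring_scope.
Set Implicit Arguments. Unset Strict Implicit. Unset Printing Implicit Defensive.

Definition bounded_measurable {R : realType} d (T : measurableType d)
    (M : R) (f : T -> R) :=
  measurable_fun setT f /\ forall x, `|f x| <= M.

Section bounded_measurable.
Context {R : realType} {d} {T : measurableType d}.
Implicit Types (f g : T -> R) (c M N : R).

Lemma bounded_measurable_ge0 M f : bounded_measurable M f -> 0 <= M.
Proof. by case=> _ /(_ point); apply: le_trans. Qed.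

Lemma bounded_measurable_cst c : bounded_measurable `|c| (fun _ : T => c).
Proof. by split; [exact: measurable_cst|]. Qed.

Lemma bounded_measurableD M N f g :
  bounded_measurable M f -> bounded_measurable N g ->
  bounded_measurable (M + N) (fun x => f x + g x).
Proof.
move=> [mf hf] [mg hg]; split; first exact: measurable_funD.
by move=> x; apply: le_trans (ler_normD _ _) _; apply: lerD.
Qed.

Lemma bounded_measurableZ c M f : bounded_measurable M f ->
  bounded_measurable (`|c| * M) (fun x => c * f x).
Proof.
move=> [mf hf]; split; last by move=> x; rewrite normrM ler_wpM2l.
by apply: measurable_funM => //; exact: measurable_cst.
Qed.

Lemma bounded_measurableB M N f g :
  bounded_measurable M f -> bounded_measurable N g ->
  bounded_measurable (M + N) (fun x => f x - g x).
Proof.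
move=> [mf hf] [mg hg]; split; first exact: measurable_funB.
by move=> x; apply: le_trans (ler_normB _ _) _; apply: lerD.
Qed.

Lemma bounded_measurableDr M c f : bounded_measurable M f ->
  bounded_measurable (M + `|c|) (fun x => f x + c).
Proof. by move/bounded_measurableD; apply; exact: bounded_measurable_cst. Qed.

End bounded_measurable.

Section probability_Rintegral.
Context {R : realType} d (T : measurableType d) (mu : {measure set T -> \bar R}).
Hypothesis mu1 : mu setT = 1%E.
Implicit Types (f g : T -> R) (c M N : R).

Lemma integrable_bounded_measurable M f :
  bounded_measurable M f -> mu.-integrable setT (EFin \o f).
Proof.
move=> bf; have [mf hM] := bf; have M0 := bounded_measurable_ge0 bf.
apply/integrableP; split; first exact/measurable_EFinP.
apply: (@le_lt_trans _ _ (M%:E * mu setT)%E); last by rewrite mu1 mule1 ltry.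
apply: integral_le_bound => //; first exact/measurable_EFinP.
by apply: aeW => x _ /=; rewrite lee_fin hM.
Qed.

Lemma Rintegral_cst1 c : \int[mu]_(x in setT) c = c.
Proof. by rewrite Rintegral_cst // mu1 /= mulr1. Qed.

Lemma le_Rintegral_bounded M N f g :
  bounded_measurable M f -> bounded_measurable N g -> (forall x, f x <= g x) ->
  \int[mu]_(x in setT) f x <= \int[mu]_(x in setT) g x.
Proof.
move=> bf bg fg; apply: le_Rintegral => //.
- exact: integrable_bounded_measurable bf.
- exact: integrable_bounded_measurable bg.
Qed.

Lemma RintegralD_bounded M N f g :
  bounded_measurable M f -> bounded_measurable N g ->
  \int[mu]_(x in setT) (f x + g x) =
    \int[mu]_(x in setT) f x + \int[mu]_(x in setT) g x.
Proof.
move=> bf bg; apply: RintegralD => //.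
- exact: integrable_bounded_measurable bf.
- exact: integrable_bounded_measurable bg.
Qed.

Lemma RintegralZl_bounded c M f : bounded_measurable M f ->
  \int[mu]_(x in setT) (c * f x) = c * \int[mu]_(x in setT) f x.
Proof.
by move=> bf; apply: RintegralZl => //; exact: integrable_bounded_measurable bf.
Qed.

Lemma Rintegral_le_cst c M f : bounded_measurable M f ->
  (forall x, f x <= c) -> \int[mu]_(x in setT) f x <= c.
Proof.
move=> bf fc; rewrite -[leRHS]Rintegral_cst1.
exact: le_Rintegral_bounded bf (bounded_measurable_cst c) fc.
Qed.

Lemma Rintegral_ge_cst c M f : bounded_measurable M f ->
  (forall x, c <= f x) -> c <= \int[mu]_(x in setT) f x.
Proof.
move=> bf cf; rewrite -[leLHS]Rintegral_cst1.
exact: le_Rintegral_bounded (bounded_measurable_cst c) bf cf.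
Qed.

Lemma normr_Rintegral_le M f : bounded_measurable M f ->
  `|\int[mu]_(x in setT) f x| <= M.
Proof.
move=> bf; have [_ hf] := bf; rewrite ler_norml; apply/andP; split.
  by apply: Rintegral_ge_cst bf _ => x; have := hf x; rewrite ler_norml => /andP[].
by apply: Rintegral_le_cst bf _ => x; have := hf x; rewrite ler_norml => /andP[].
Qed.

End probability_Rintegral.

Section kernel_Rintegral.
Context {R : realType} d1 d2 (X : measurableType d1) (Y : measurableType d2).
Variable k : R.-pker X ~> Y.

Lemma bounded_measurable_pair1 M (F : X * Y -> R) x :
  bounded_measurable M F -> bounded_measurable M (fun y => F (x, y)).
Proof.
case=> mF hF; split=> // y.
by apply: measurableT_comp => //; exact: pair1_measurable.
Qed.

(* The library gives measurability in [x] only for nonnegative integrands, hence the shift by [M]. *)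
Lemma bounded_measurable_kernel_Rintegral M (F : X * Y -> R) :
  bounded_measurable M F ->
  bounded_measurable M (fun x => \int[k x]_(y in setT) F (x, y)).
Proof.
move=> bF; have [mF hF] := bF; have k1 x : k x setT = 1%E by apply: prob_kernel.
split=> [|x]; last exact: (normr_Rintegral_le (k1 x) (bounded_measurable_pair1 x bF)).
have FM_ge0 z : (0 <= (F z + M)%:E)%E.
  by rewrite lee_fin -lerBlDr sub0r; have := hF z; rewrite ler_norml => /andP[].
have -> : (fun x => \int[k x]_(y in setT) F (x, y)) =
    (fun x => fine (\int[k x]_y ((F (x, y) + M)%:E))%E - M).
  apply/funext => x; rewrite -/(Rintegral (k x) setT (fun y => F (x, y) + M)).
  rewrite (RintegralD_bounded (k1 x) (bounded_measurable_pair1 x bF)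
    (bounded_measurable_cst M)).
  by rewrite Rintegral_cst1 // addrK.
apply: measurable_funB => //; apply: measurableT_comp => //.
apply: (measurable_fun_integral_finite_kernel (fun z => (F z + M)%:E)) => //.
by apply/measurable_EFinP; apply: measurable_funD => //; exact: measurable_cst.
Qed.

Lemma bounded_measurable_kernel_mean M (f : Y -> R) :
  bounded_measurable M f ->
  bounded_measurable M (fun x => \int[k x]_(y in setT) f y).
Proof.
case=> mf hf; apply: (@bounded_measurable_kernel_Rintegral M (fun z => f z.2)).
by split=> // z; exact: measurableT_comp.
Qed.

End kernel_Rintegral.

Lemma geometric_sum_nat {R : comPzRingType} (be : R) n m : (n <= m)%N ->
  (1 - be) * \sum_(n <= t < m) be ^+ t = be ^+ n - be ^+ m.
Proof.
elim: m => [|m IH]; first by rewrite leqn0 => /eqP ->; rewrite big_geq // mulr0 subrr.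
rewrite leq_eqVlt => /orP[/eqP ->|]; first by rewrite big_geq // mulr0 subrr.
by rewrite ltnS => nm; rewrite big_nat_recr //= mulrDr IH // exprS; ring.
Qed.

Section geometric.
Context {R : realType} (be : R).
Hypotheses (be0 : 0 <= be) (be1 : be < 1).

Lemma geometric_sum_nat_le n m : (1 - be) * \sum_(n <= t < m) be ^+ t <= be ^+ n.
Proof.
case: (leqP n m) => nm; first by rewrite geometric_sum_nat // lerBlDr lerDl exprn_ge0.
by rewrite big_geq ?mulr0 ?exprn_ge0 // ltnW.
Qed.

Lemma le_geometric_slack x y K : (forall n, x <= y + K * be ^+ n) -> x <= y.
Proof.
move=> xy; have yK : (fun n => y + K * be ^+ n) @ \oo --> y.
  rewrite -[X in _ --> X]addr0; apply: cvgD; first exact: cvg_cst.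
  by apply: cvg_geometric; rewrite ger0_norm.
rewrite -(cvg_lim _ yK) //; apply: limr_ge; first by apply/cvgP: yK.
by near=> n; apply: xy.
Unshelve. all: by end_near.
Qed.

Lemma eq_geometric_slack (x y : R) K : (forall n, `|x - y| <= K * be ^+ n) -> x = y.
Proof.
move=> xy; apply/eqP; rewrite eq_le; apply/andP; split;
  apply: (le_geometric_slack (K := K)) => n;
  by have := xy n; rewrite ler_norml => /andP[]; lra.
Qed.

Variables (a : nat -> R) (B : R).
Hypothesis a_le : forall t, `|a t| <= B * be ^+ t.

Lemma is_cvg_series_geometric_bounded : cvgn (series a).
Proof.
apply: normed_cvg; apply: (@series_le_cvg _ _ (geometric B be)) => n //=.
- exact: le_trans (normr_ge0 (a n)) (a_le n).
- by apply: is_cvg_geometric_series; rewrite ger0_norm.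
Qed.

Lemma series_geometric_bounded_sub n m : (n <= m)%N ->
  `|series a m - series a n| <= B * be ^+ n / (1 - be).
Proof.
move=> nm; rewrite /series /= (@big_cat_nat _ _ _ n 0 m) //= addrAC subrr add0r.
have be1' : 0 < 1 - be by rewrite subr_gt0.
apply: le_trans (ler_norm_sum _ _ _) _.
apply: le_trans (ler_sum _ (fun t _ => a_le t)) _.
rewrite -mulr_sumr ler_pdivlMr // -mulrA [_ * (1 - be)]mulrC.
rewrite ler_wpM2l ?geometric_sum_nat_le //.
by apply: le_trans (normr_ge0 (a 0)) _; have := a_le 0; rewrite expr0 mulr1.
Qed.

Lemma series_geometric_bounded_lim n :
  `|limn (series a) - series a n| <= B * be ^+ n / (1 - be).
Proof.
rewrite ler_norml; apply/andP; split.
  rewrite lerBrDr; apply: limr_ge; first exact: is_cvg_series_geometric_bounded.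
  near=> m; have nm : (n <= m)%N by near: m; exists n.
  by have := series_geometric_bounded_sub nm; rewrite ler_norml => /andP[]; lra.
rewrite lerBlDr; apply: limr_le; first exact: is_cvg_series_geometric_bounded.
near=> m; have nm : (n <= m)%N by near: m; exists n.
by have := series_geometric_bounded_sub nm; rewrite ler_norml => /andP[]; lra.
Unshelve. all: by end_near.
Qed.

End geometric.

Section transition_operator.
Context {R : realType} {dS dA : measure_display}
  {S : measurableType dS} {A : measurableType dA}.
Variables (P : R.-pker (S * A)%type ~> S) (p : R.-pker S ~> A).
Implicit Types (f g : S -> R) (c M N : R).

Lemma bounded_measurable_polavg M (G : S -> A -> R) :
  bounded_measurable M (fun z => G z.1 z.2) -> bounded_measurable M (polavg p G).
Proof. exact: bounded_measurable_kernel_Rintegral. Qed.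

Lemma bounded_measurable_next_mean M f s : bounded_measurable M f ->
  bounded_measurable M (fun a => \int[P (s, a)]_(s' in setT) f s').
Proof.
by move/(bounded_measurable_kernel_mean P)/(bounded_measurable_pair1 s).
Qed.

Lemma bounded_measurable_next_mean_pair M f : bounded_measurable M f ->
  bounded_measurable M (fun z : S * A => \int[P (z.1, z.2)]_(s' in setT) f s').
Proof.
move/(bounded_measurable_kernel_mean P).
by rewrite (_ : (fun z => _) = fun z => \int[P z]_(s' in setT) f s') //; apply/funext => -[].
Qed.

Lemma bounded_measurable_Pop M f :
  bounded_measurable M f -> bounded_measurable M (Pop P p f).
Proof.
move=> bf; apply: (@bounded_measurable_polavg _ (fun s a => \int[P (s, a)]_(s' in setT) f s')).
exact: bounded_measurable_next_mean_pair.
Qed.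

Lemma Pop_linear c M N f g s :
  bounded_measurable M f -> bounded_measurable N g ->
  Pop P p (fun x => c * f x + g x) s = c * Pop P p f s + Pop P p g s.
Proof.
move=> bf bg; have ps1 : p s setT = 1%E by apply: prob_kernel.
have P1 a : P (s, a) setT = 1%E by apply: prob_kernel.
have bfs := bounded_measurable_next_mean s bf.
have bgs := bounded_measurable_next_mean s bg.
rewrite /Pop -(RintegralZl_bounded ps1 c bfs).
rewrite -(RintegralD_bounded ps1 (bounded_measurableZ c bfs) bgs).
apply: eq_Rintegral => a _.
by rewrite (RintegralD_bounded (P1 a) (bounded_measurableZ c bf) bg)
  (RintegralZl_bounded (P1 a) c bf).
Qed.

Lemma Pop_cst c s : Pop P p (fun _ => c) s = c.
Proof.
have P1 a : P (s, a) setT = 1%E by apply: prob_kernel.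
rewrite /Pop; under eq_Rintegral do rewrite Rintegral_cst1 //.
by apply: Rintegral_cst1; apply: prob_kernel.
Qed.

Lemma le_Pop M N f g s :
  bounded_measurable M f -> bounded_measurable N g -> (forall x, f x <= g x) ->
  Pop P p f s <= Pop P p g s.
Proof.
move=> bf bg fg; have ps1 : p s setT = 1%E by apply: prob_kernel.
apply: (le_Rintegral_bounded ps1 (bounded_measurable_next_mean s bf)
  (bounded_measurable_next_mean s bg)) => a.
by apply: (le_Rintegral_bounded _ bf bg fg); apply: prob_kernel.
Qed.

Lemma PopDr M c f s : bounded_measurable M f ->
  Pop P p (fun x => f x + c) s = Pop P p f s + c.
Proof.
move=> bf; have := Pop_linear 1 s bf (bounded_measurable_cst c).
by rewrite mul1r Pop_cst; under eq_fun do rewrite mul1r.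
Qed.

Lemma Pop_le_cst M c f s : bounded_measurable M f -> (forall x, f x <= c) ->
  Pop P p f s <= c.
Proof.
by move=> bf fc; rewrite -[leRHS](Pop_cst c s); exact: le_Pop bf (bounded_measurable_cst c) fc.
Qed.

Lemma Pop_ge_cst M c f s : bounded_measurable M f -> (forall x, c <= f x) ->
  c <= Pop P p f s.
Proof.
by move=> bf cf; rewrite -[leLHS](Pop_cst c s); exact: le_Pop (bounded_measurable_cst c) bf cf.
Qed.

Lemma normr_Pop_sub_le M N e f g s :
  bounded_measurable M f -> bounded_measurable N g -> (forall x, `|f x - g x| <= e) ->
  `|Pop P p f s - Pop P p g s| <= e.
Proof.
move=> bf bg fg; have bgf := bounded_measurableD (bounded_measurableZ (-1) bg) bf.
have -> : Pop P p f s - Pop P p g s = Pop P p (fun x => -1 * g x + f x) s.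
  by rewrite (Pop_linear _ _ bg bf) addrC mulN1r.
rewrite ler_norml; apply/andP; split.
- by apply: Pop_ge_cst bgf _ => x; have := fg x; rewrite ler_norml; lra.
- by apply: Pop_le_cst bgf _ => x; have := fg x; rewrite ler_norml; lra.
Qed.

Lemma bounded_measurable_iter_Pop M f t :
  bounded_measurable M f -> bounded_measurable M (iter t (Pop P p) f).
Proof. by move=> bf; elim: t => //= t; apply: bounded_measurable_Pop. Qed.

Lemma ge0_Pop_superharmonic be B w : 0 <= be -> be < 1 -> bounded_measurable B w ->
  (forall s, be * Pop P p w s <= w s) -> forall s, 0 <= w s.
Proof.
move=> be0 be1 bw w_super s; have [_ w_le] := bw.
have w_ge n x : - (B * be ^+ n) <= w x.
  elim: n x => [|n IH] x; first by have := w_le x; rewrite expr0 mulr1 ler_norml => /andP[].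
  apply: le_trans (w_super x); rewrite exprS mulrCA -mulrN ler_wpM2l //.
  exact: Pop_ge_cst bw IH.
by apply: (le_geometric_slack be0 be1 (K := B)) => n; rewrite -lerBlDr sub0r w_ge.
Qed.

End transition_operator.

Section value.
Context {R : realType} {dS dA : measure_display}
  {S : measurableType dS} {A : measurableType dA}.
Variables (P : R.-pker (S * A)%type ~> S) (p : R.-pker S ~> A).
Variables (be : R) (rr : S -> A -> R) (M : R).
Hypotheses (be0 : 0 <= be) (be1 : be < 1).
Hypothesis brr : bounded_measurable M (fun z => rr z.1 z.2).

Let u t := iter t (Pop P p) (polavg p rr).
Let V := value be P rr p.
Let Vn n s := \sum_(0 <= t < n) be ^+ t * u t s.

Let bounded_measurable_u t : bounded_measurable M (u t).
Proof. by apply/bounded_measurable_iter_Pop/bounded_measurable_polavg. Qed.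

Let term_le s t : `|be ^+ t * u t s| <= M * be ^+ t.
Proof.
rewrite normrM ger0_norm ?exprn_ge0 // mulrC ler_wpM2r ?exprn_ge0 //.
by case: (bounded_measurable_u t).
Qed.

Let value_sub_partial n s : `|V s - Vn n s| <= M * be ^+ n / (1 - be).
Proof. exact: (series_geometric_bounded_lim be0 be1 (term_le s)). Qed.

Let bounded_measurable_partial n : bounded_measurable (M / (1 - be)) (Vn n).
Proof.
split=> [|s].
  apply: measurable_sum => t; apply: measurable_funM; first exact: measurable_cst.
  by case: (bounded_measurable_u t).
have be1' : 0 < 1 - be by rewrite subr_gt0.
apply: le_trans (ler_norm_sum _ _ _) _.
apply: le_trans (ler_sum _ (fun t _ => term_le s t)) _.
rewrite -mulr_sumr ler_pdivlMr // -mulrA [_ * (1 - be)]mulrC.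
have := geometric_sum_nat_le be0 0 n; rewrite expr0 => sum_le.
rewrite -[leRHS]mulr1 ler_wpM2l //.
exact: bounded_measurable_ge0 brr.
Qed.

Lemma bounded_measurable_value : bounded_measurable (M / (1 - be)) V.
Proof.
split=> [|s]; last by have := value_sub_partial 0 s; rewrite /Vn big_geq // subr0 expr0 mulr1.
apply: (measurable_fun_cvg (h := Vn)) => [n|s _].
  by case: (bounded_measurable_partial n).
exact: (is_cvg_series_geometric_bounded be0 be1 (term_le s)).
Qed.

Let Pop_partial n s : Pop P p (Vn n) s = \sum_(0 <= t < n) be ^+ t * u t.+1 s.
Proof.
elim: n => [|n IH].
  by rewrite (_ : Vn 0 = fun=> 0) ?Pop_cst ?big_geq //; apply/funext => x; rewrite /Vn big_geq.
have -> : Vn n.+1 = fun s => be ^+ n * u n s + Vn n s.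
  by apply/funext => x; rewrite /Vn big_nat_recr //= addrC.
rewrite (Pop_linear _ _ _ _ (bounded_measurable_u n) (bounded_measurable_partial n)) IH.
by rewrite big_nat_recr //= addrC.
Qed.

Let partialS n s : Vn n.+1 s = polavg p rr s + be * Pop P p (Vn n) s.
Proof.
rewrite Pop_partial /Vn big_nat_recl //= expr0 mul1r mulr_sumr.
by congr (_ + _); apply: eq_bigr => t _; rewrite exprS mulrA.
Qed.

(* Truncating after [n + 1] terms costs [M be^(n+1) / (1 - be)] on each side of the
   fixed-point equation, uniformly in [s]. *)
Lemma value_Bellman s : V s = polavg p rr s + be * Pop P p V s.
Proof.
have be1' : 0 < 1 - be by rewrite subr_gt0.
apply: (eq_geometric_slack be0 be1 (K := 2 * (M / (1 - be)))) => n.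
have Pop_sub : `|Pop P p (Vn n) s - Pop P p V s| <= M * be ^+ n / (1 - be).
  apply: normr_Pop_sub_le (bounded_measurable_partial n) bounded_measurable_value _.
  by move=> x; rewrite distrC value_sub_partial.
have -> : V s - (polavg p rr s + be * Pop P p V s) =
    (V s - Vn n.+1 s) + be * (Pop P p (Vn n) s - Pop P p V s).
  by rewrite partialS; ring.
apply: le_trans (ler_normD _ _) _; rewrite normrM ger0_norm //.
have M0 := bounded_measurable_ge0 brr.
have X0 : 0 <= M / (1 - be) * be ^+ n by rewrite mulr_ge0 ?divr_ge0 ?exprn_ge0 // ltW.
have beX := ler_piMl X0 (ltW be1).
have := value_sub_partial n.+1 s; have := ler_wpM2l be0 Pop_sub.
have -> : M * be ^+ n.+1 / (1 - be) = be * (M / (1 - be) * be ^+ n) by rewrite exprS; ring.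
have -> : M * be ^+ n / (1 - be) = M / (1 - be) * be ^+ n by ring.
lra.
Qed.

End value.

Lemma at_dist_le_cst {R : realType} d (T : measurableType d) (d0 : probability T R)
    M c (f : T -> R) :
  bounded_measurable M f -> (forall x, f x <= c) -> at_dist d0 f <= c.
Proof. by apply: Rintegral_le_cst; exact: probability_setT. Qed.

Section occupancy.
Context {R : realType} {dS dA : measure_display}
  {S : measurableType dS} {A : measurableType dA}.
Variables (P : R.-pker (S * A)%type ~> S) (pi : R.-pker S ~> A).
Variables (g : R) (d0 : probability S R) (G : S -> A -> R) (B C : R).
Hypotheses (g0 : 0 <= g) (g1 : g < 1).
Hypothesis bG : bounded_measurable B (fun z => G z.1 z.2).
Hypothesis G_le : forall s a, G s a <= C.

Lemma occ_exp_le_cst : occ_exp g P d0 pi G <= C.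
Proof.
pose u t := iter t (Pop P pi) (polavg pi G).
have bu t : bounded_measurable B (u t).
  exact/bounded_measurable_iter_Pop/bounded_measurable_polavg.
have u_le t s : u t s <= C.
  elim: t s => [|t IH] s; last exact: Pop_le_cst (bu t) IH.
  apply: Rintegral_le_cst (bounded_measurable_pair1 s bG) (G_le s).
  exact: prob_kernel.
pose a t := g ^+ t * at_dist d0 (u t).
have a_le t : `|a t| <= B * g ^+ t.
  rewrite normrM ger0_norm ?exprn_ge0 // mulrC ler_wpM2r ?exprn_ge0 //.
  by apply: normr_Rintegral_le (bu t); exact: probability_setT.
have g1' : 0 < 1 - g by rewrite subr_gt0.
have series_le n : (1 - g) * series a n <= C - C * g ^+ n.
  have := geometric_sum_nat g (leq0n n); rewrite expr0 => geo.
  have : series a n <= C * \sum_(0 <= t < n) g ^+ t.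
    rewrite /series /= mulr_sumr; apply: ler_sum => t _.
    by rewrite /a mulrC ler_wpM2r ?exprn_ge0 // (at_dist_le_cst d0 (bu t) (u_le t)).
  by move=> /(ler_wpM2l (ltW g1')); rewrite mulrCA geo; lra.
apply: (le_geometric_slack g0 g1 (K := B - C)) => n.
have := series_geometric_bounded_lim g0 g1 a_le n.
rewrite ler_norml => /andP[_ /(ler_wpM2l (ltW g1'))].
have -> : (1 - g) * (B * g ^+ n / (1 - g)) = B * g ^+ n.
  by field; rewrite subr_eq0 eq_sym lt_eqF.
by rewrite /occ_exp -/(series a); have := series_le n; lra.
Qed.

End occupancy.

Section reshaping_bias.
Context {R : realType} {dS dA : measure_display}
  {S : measurableType dS} {A : measurableType dA}.
Variables (P : R.-pker (S * A)%type ~> S) (d0 : probability S R).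
Variables (r : S -> A -> R) (h : S -> R) (g lam Mh : R).
Variables (pistar pitstar pi : R.-pker S ~> A).
Hypotheses (g0 : 0 <= g) (g1 : g < 1) (lam0 : 0 <= lam) (lam1 : lam <= 1).
Hypothesis br : bounded_measurable 1 (fun z => r z.1 z.2).
Hypothesis bh : bounded_measurable Mh h.

Let rt := reshaped_reward g lam P r h.
Let be := lam * g.
Let L := (1 - lam) * g.
Let V := value g P r pistar.
Let W := value be P rt pistar.
Let Vt := value be P rt pitstar.
Hypothesis pitstar_ge : forall s, W s <= Vt s.

Let be0 : 0 <= be. Proof. exact: mulr_ge0. Qed.
Let be1 : be < 1. Proof. by apply: le_lt_trans g1; rewrite ler_piMl. Qed.
Let L0 : 0 <= L. Proof. by rewrite mulr_ge0 // subr_ge0. Qed.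

Let bounded_measurable_rt : bounded_measurable (1 + L * Mh) (fun z => rt z.1 z.2).
Proof.
have -> : (fun z => rt z.1 z.2) = fun z => r z.1 z.2 + L * \int[P z]_(s' in setT) h s'.
  by apply/funext => -[s a].
apply: bounded_measurableD br _.
by rewrite -[L in L * Mh]ger0_norm //; apply/bounded_measurableZ/bounded_measurable_kernel_mean.
Qed.

Let bV : bounded_measurable (1 / (1 - g)) V.
Proof. exact: bounded_measurable_value. Qed.

Let bW : bounded_measurable ((1 + L * Mh) / (1 - be)) W.
Proof. exact: bounded_measurable_value. Qed.

Let bVt : bounded_measurable ((1 + L * Mh) / (1 - be)) Vt.
Proof. exact: bounded_measurable_value. Qed.

Let polavg_rt s : polavg pistar rt s = polavg pistar r s + L * Pop P pistar h s.
Proof.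
have ps1 : pistar s setT = 1%E by apply: prob_kernel.
have brs : bounded_measurable 1 (fun a => r s a) := bounded_measurable_pair1 s br.
have bPh := bounded_measurable_next_mean P s bh.
by rewrite /polavg -(RintegralZl_bounded ps1 L bPh)
  -(RintegralD_bounded ps1 brs (bounded_measurableZ L bPh)).
Qed.

Variables (b e : R).
Hypothesis h_near : forall s, `|h s + b - V s| <= e.

Let d := L * (- b - e) / (1 - be).

Let value_shift_sub s : V s + d <= polavg pistar rt s + be * Pop P pistar (fun x => V x + d) s.
Proof.
have Ph_ge : Pop P pistar V s + (- b - e) <= Pop P pistar h s.
  rewrite -(PopDr _ _ _ _ bV); apply: le_Pop (bounded_measurableDr _ bV) bh _.
  by move=> x; have := h_near x; rewrite ler_norml; lra.
have Bellman := value_Bellman P pistar g0 g1 br s.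
rewrite polavg_rt (PopDr _ _ _ _ bV) -/V in Bellman *.
have Ld : L * (- b - e) = d - be * d.
  by rewrite /d; field; rewrite subr_eq0 eq_sym lt_eqF.
have gL : g * Pop P pistar V s = L * Pop P pistar V s + be * Pop P pistar V s.
  by rewrite /L /be; ring.
have := ler_wpM2l L0 Ph_ge; rewrite mulrDr [be * (_ + d)]mulrDr; lra.
Qed.

Let value_reshaped_ge s : V s + d <= W s.
Proof.
have bVd := bounded_measurableDr d bV.
have bw := bounded_measurableD (bounded_measurableZ (-1) bVd) bW.
suff : 0 <= -1 * (V s + d) + W s by lra.
apply: (ge0_Pop_superharmonic be0 be1 bw) => x.
rewrite (Pop_linear _ _ _ _ bVd bW).
have := value_shift_sub x; have := value_Bellman P pistar be0 be1 bounded_measurable_rt x.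
rewrite -/W mulrDr mulN1r mulrN; lra.
Qed.

Let value_opt_reshaped_ge s : V s + d <= Vt s.
Proof. exact: le_trans (value_reshaped_ge s) (pitstar_ge s). Qed.

Lemma Bias_le_offset : Bias g lam P d0 h V Vt pi <= 2 * (g * (1 - lam) / (1 - g)) * e.
Proof.
have g1' : 0 < 1 - g by rewrite subr_gt0.
have K0 : 0 <= g * (1 - lam) / (1 - g) by rewrite divr_ge0 ?mulr_ge0 ?subr_ge0 // ltW.
have d01 : d0 setT = 1%E by apply: probability_setT.
have at_dist_sub : at_dist d0 V - at_dist d0 Vt <= - d.
  have : at_dist d0 V <= at_dist d0 (fun s => Vt s + - d).
    apply: (le_Rintegral_bounded d01 bV (bounded_measurableDr _ bVt)) => x.
    by have := value_opt_reshaped_ge x; lra.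
  rewrite /at_dist (RintegralD_bounded d01 bVt (bounded_measurable_cst _)).
  by rewrite (Rintegral_cst1 d01) => VVt; rewrite lerBlDr addrC.
have occ_le : occ_exp g P d0 pi (fun s a => \int[P (s, a)]_(s' in setT) (h s' - Vt s'))
    <= - b + e - d.
  have bhVt := bounded_measurableB bh bVt.
  apply: occ_exp_le_cst g0 g1 (bounded_measurable_next_mean_pair P bhVt) _ => s a.
  apply: Rintegral_le_cst bhVt _; first exact: prob_kernel.
  move=> x; have := h_near x; have := value_opt_reshaped_ge x.
  by move: (h x) (V x) (Vt x) => hx vx vtx; rewrite ler_norml; lra.
rewrite /Bias; apply: le_trans (lerD at_dist_sub (ler_wpM2l K0 occ_le)) _.
suff -> : - d + g * (1 - lam) / (1 - g) * (- b + e - d) =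
    2 * (g * (1 - lam) / (1 - g)) * e by [].
rewrite /d /L /be; field.
by rewrite !subr_eq0 ![1 == _]eq_sym lt_eqF // lt_eqF.
Qed.

End reshaping_bias.

Lemma ereal_inf_sup_approx {R : realType} (T : Type) (f : R -> T -> R) (eps eta : R) :
  0 < eta ->
  (ereal_inf [set ereal_sup [set (f b x)%:E | x in [set: T]] | b in [set: R]]
    <= eps%:E)%E ->
  exists b, forall x, f b x <= eps + eta.
Proof.
move=> eta0 /le_lt_trans/(_ (_ : _ < (eps + eta)%:E)%E).
rewrite lte_fin ltrDl => /(_ eta0) /ereal_inf_lt[_ [b _ <-] sup_lt].
exists b => x; rewrite -lee_fin; apply: le_trans (ltW sup_lt).
by apply: ereal_sup_ubound; exists x.
Qed.

Lemma twice_bias_constant_le {R : realFieldType} (g lam : R) : g != 1 ->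
  2 * (g * (1 - lam) / (1 - g)) <= (1 - lam * g) ^+ 2 / (1 - g) ^+ 2.
Proof.
move=> g_neq1; have g1 : 1 - g != 0 by rewrite subr_eq0 eq_sym.
rewrite -subr_ge0.
have -> : (1 - lam * g) ^+ 2 / (1 - g) ^+ 2 - 2 * (g * (1 - lam) / (1 - g)) =
    ((g * (1 - lam)) ^+ 2 + (1 - g) ^+ 2) / (1 - g) ^+ 2 by field.
by rewrite divr_ge0 ?addr_ge0 ?sqr_ge0.
Qed.

Theorem corollary1 (R : realType) (dS dA : measure_display)
  (S : measurableType dS) (A : measurableType dA)
  (P : R.-pker (S * A)%type ~> S) (r : S -> A -> R) (g : R)
  (d0 : probability S R)
  (pistar pitstar : R.-pker S ~> A)
  (h : S -> R) (lam : R) (pi : R.-pker S ~> A) (eps : R) :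
  measurable_fun [set: (S * A)%type] (fun sa => r sa.1 sa.2) ->
  (forall s a, 0 <= r s a <= 1) ->
  0 <= g < 1 ->
  (* pistar is an optimal policy of M *)
  (forall (p : R.-pker S ~> A) s, value g P r p s <= value g P r pistar s) ->
  (* pitstar is an optimal policy of the reshaped MDP M~ *)
  (forall (p : R.-pker S ~> A) s,
      value (lam * g) P (reshaped_reward g lam P r h) p s <=
      value (lam * g) P (reshaped_reward g lam P r h) pitstar s) ->
  (* h bounded (and measurable) *)
  measurable_fun [set: S] h ->
  (exists M : R, forall s, `|h s| <= M) ->
  0 <= lam <= 1 ->
  0 <= eps ->
  (ereal_inf [set ereal_sup [set (`|h s + b - value g P r pistar s|)%:E | s in [set: S]]
             | b in [set: R]] <= eps%:E)%E ->
  Bias g lam P d0 h (value g P r pistar)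
       (value (lam * g) P (reshaped_reward g lam P r h) pitstar) pi
  <= (1 - lam * g) ^+ 2 / (1 - g) ^+ 2 * eps.
Proof.
move=> mr r01 /andP[g0 g1] _ pitstar_opt mh [Mh h_le] /andP[lam0 lam1] eps0 h_inf.
have br : bounded_measurable 1 (fun z => r z.1 z.2).
  by split=> // -[s a]; have /andP[r0 r1] := r01 s a; rewrite ger0_norm.
have half0 : 0 <= 1 / 2 :> R by rewrite divr_ge0.
have half1 : 1 / 2 < 1 :> R by rewrite ltr_pdivrMr // mul1r ltr1n.
apply: (le_geometric_slack half0 half1 (K := (1 - lam * g) ^+ 2 / (1 - g) ^+ 2)) => n.
have eta0 : 0 < (1 / 2 : R) ^+ n by rewrite exprn_gt0 // divr_gt0.
have [b h_near] := ereal_inf_sup_approx eta0 h_inf.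
apply: le_trans (Bias_le_offset d0 pi g0 g1 lam0 lam1 br (conj mh h_le) (pitstar_opt _) h_near) _.
rewrite -mulrDr ler_wpM2r ?addr_ge0 ?(ltW eta0) //.
by apply: twice_bias_constant_le; rewrite lt_eqF.
Qed.
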